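(* Let $P:\mathbb{Z}^2\to\mathbb{R}\mathrm{P}^n$ be a Q-net and let $m<n$ be a positive integer. Generically, $\mathcal{L}_A^mP$ is Laplace degenerate if and only if for each $i\in\mathbb{Z}$ the intersection $\bigcap_{j\in\mathbb{Z}}\big(P_{i,j}\vee P_{i+1,j}\vee\cdots\vee P_{i+m,j}\big)$ is a point.
   Context: A Q-net is a map $P:\mathbb{Z}^2\to\mathbb{R}\mathrm{P}^n$ such that for all $(i,j)$ the points $P_{i,j},P_{i+1,j},P_{i+1,j+1},P_{i,j+1}$ are coplanar; $\vee$ denotes projective join. Laplace transforms: $\mathcal{L}_AP(i,j)=(P_{i,j}\vee P_{i+1,j})\cap(P_{i,j+1}\vee P_{i+1,j+1})$, $\mathcal{L}_BP(i,j)=(P_{i,j}\vee P_{i,j+1})\cap(P_{i+1,j}\vee P_{i+1,j+1})$, again Q-nets; $\mathcal{L}_A^m$ denotes the $m$-fold iterate. $\mathcal{L}_A^mP$ is Laplace degenerate if $\mathcal{L}_A^mP(i,j)$ is independent of $j$. ''Generically'' means for data in general position subject to the stated constraints. *)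

(* Projective space RP^n is modelled as the lattice of
   row spaces of (n+1)-column real matrices: a projective subspace is
   the row space of a square matrix A : 'M[R]_(n.+1) (compared with
   (_ == _)%MS), a point is a subspace of rank 1, join is (_ + _)%MS and
   intersection is (_ :&: _)%MS. *)
From HB Require Import structures.
From mathcomp Require Import all_boot all_order all_algebra.
From mathcomp Require Import reals.
Set Implicit Arguments. Unset Strict Implicit. Unset Printing Implicit Defensive.
Import Order.TTheory GRing.Theory Num.Theory.
Local Open Scope ring_scope.

Section QNets.
Variables (R : realType) (n : nat).
Notation sub := 'M[R]_(n.+1).

Definition net := int -> int -> sub.

(* P is a Q-net: every P i j is a point and each elementary quadrilateral
   is coplanar (its join has projective dimension <= 2, i.e. rank <= 3). *)
Definition is_qnet (P : net) : Prop :=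
  forall i j : int,
    \rank (P i j) = 1%N /\
    (\rank (P i j + P (i + 1)%R j + P (i + 1)%R (j + 1)%R + P i (j + 1)%R)%MS <= 3)%N.

Definition LA (P : net) : net :=
  fun i j => ((P i j + P (i + 1)%R j) :&: (P i (j + 1)%R + P (i + 1)%R (j + 1)%R))%MS.

Definition LAn (m : nat) (P : net) : net := iter m LA P.

Definition LA_degenerate (m : nat) (P : net) : Prop :=
  forall i j j' : int, (LAn m P i j == LAn m P i j')%MS.

Definition row_join (w : nat) (Q : net) (i j : int) : sub :=
  (\sum_(l < w.+1) Q (i + (l : nat)%:Z)%R j)%MS.

Definition meet_is_point (F : int -> sub) : Prop :=
  exists2 X : sub, \rank X = 1%N &
    forall w : 'rV[R]_(n.+1), (forall j, (w <= F j)%MS) <-> (w <= X)%MS.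

(* "Generic" position: for every k <= m,
   - the iterated Laplace transforms L_A^k P are points,
   - any m-k+1 consecutive points L_A^k P(i,j),...,L_A^k P(i+m-k,j) of a row
     span a subspace of the maximal dimension m-k,
   - k+1 consecutive m-spaces S_{i,j},...,S_{i,j+k}
     (S_{i,j} = P_{i,j} v ... v P_{i+m,j}) meet in a subspace of the
     expected dimension m-k (consecutive ones share an (m-1)-space in a
     Q-net, each further one cuts the dimension by one). *)
Definition generic_LA (m : nat) (P : net) : Prop :=
  forall k : nat, (k <= m)%N -> forall i j : int,
    [/\ \rank (LAn k P i j) = 1%N,
        \rank (row_join (m - k) (LAn k P) i j) = (m - k).+1
      & \rank (\bigcap_(l < k.+1) row_join m P i (j + (l : nat)%:Z)%R)%MS
          = (m - k).+1].

End QNets.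

(* L_A^k P(i,j) lies in every m-space S_{i,j+l} = P_{i,j} v ... v P_{i+m,j+l}
   with l <= k, so for k = m it lies in the meet of m+1 consecutive S_{i,j};
   in general position both are points, hence equal.  L_A^m P is then Laplace
   degenerate iff these (m+1)-fold meets do not depend on j, i.e. iff the
   meet of all the S_{i,j} is a point. *)
From HB Require Import structures.
From mathcomp Require Import all_boot all_order all_algebra.
From mathcomp Require Import reals.
From mathcomp Require Import zify.
Import Order.TTheory GRing.Theory Num.Theory.
Local Open Scope ring_scope.

Set Implicit Arguments.
Unset Strict Implicit.
Unset Printing Implicit Defensive.

Section RowJoins.
Variables (R : realType) (n : nat).
Implicit Types (P Q : net R n) (F : int -> 'M[R]_n.+1).

Lemma row_join_sub Q (w w' : nat) (i i' j : int) :
  i' <= i -> i + w%:Z <= i' + w'%:Z ->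
  (row_join w Q i j <= row_join w' Q i' j)%MS.
Proof.
move=> le_i'i le_end; apply/sumsmx_subP => a _.
have lt_b : (absz (i - i' + (a : nat)%:Z)%R < w'.+1)%N.
  by have := ltn_ord a; lia.
have -> : i + (a : nat)%:Z = i' + (Ordinal lt_b : nat)%:Z by rewrite /=; lia.
exact: sumsmx_sup.
Qed.

Lemma LAn_sub_row_join P (k l : nat) (i j : int) :
  (l <= k)%N -> (LAn k P i j <= row_join k P i (j + l%:Z))%MS.
Proof.
elim: k i j l => [|k IH] i j l le_lk.
  have -> : l = 0%N by lia.
  by rewrite addr0 (sumsmx_sup ord0) //= addr0.
have row_joinS i' j' : (i <= i' <= i + 1) ->
    (row_join k P i' j' <= row_join k.+1 P i j')%MS.
  by case/andP=> ? ?; apply: row_join_sub => //; lia.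
rewrite /LAn iterS -/(LAn k P) /LA.
case: l le_lk => [|l] le_lk.
  apply: submx_trans (capmxSl _ _) _.
  by rewrite addsmx_sub; apply/andP; split;
    apply: submx_trans (IH _ j 0%N (leq0n k)) (row_joinS _ _ _); lia.
apply: submx_trans (capmxSr _ _) _.
have -> : j + l.+1%:Z = (j + 1) + l%:Z by lia.
by rewrite addsmx_sub; apply/andP; split;
  apply: submx_trans (IH _ _ l le_lk) (row_joinS _ _ _); lia.
Qed.

Definition consecutive_meet (w : nat) F (j : int) : 'M[R]_n.+1 :=
  (\bigcap_(l < w.+1) F (j + (l : nat)%:Z)%R)%MS.

Lemma LAn_sub_consecutive_meet P (k : nat) (i j : int) :
  (LAn k P i j <= consecutive_meet k (row_join k P i) j)%MS.
Proof. by apply/sub_bigcapmxP => l _; apply: LAn_sub_row_join; rewrite -ltnS. Qed.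

Lemma meet_is_point_iff_consecutive_meet_const (w : nat) F :
  (forall j, \rank (consecutive_meet w F j) = 1%N) ->
  meet_is_point F <->
  forall j j', (consecutive_meet w F j == consecutive_meet w F j')%MS.
Proof.
move=> rank_meet; split=> [[X rankX memX] | meet_const].
  have X_eq_meet j : (X == consecutive_meet w F j)%MS.
    rewrite -(eq_leqif (mxrank_leqif_eq _)) ?rankX ?rank_meet //.
    apply/sub_bigcapmxP => l _; apply/row_subP => r.
    exact: (memX _).2 (row_sub r X) _.
  move=> j j'; apply/eqmxP.
  exact: eqmx_trans (eqmx_sym (eqmxP (X_eq_meet j))) (eqmxP (X_eq_meet j')).
exists (consecutive_meet w F 0) => // v; split=> [memF | sub_meet j].
  by apply/sub_bigcapmxP => l _; apply: memF.
apply: submx_trans sub_meet _; rewrite (eqmxP (meet_const 0 j)).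
by apply: (bigcapmx_inf ord0) => //=; rewrite addr0.
Qed.

Lemma LAn_eq_consecutive_meet (m : nat) P (i j : int) :
  generic_LA m P ->
  (LAn m P i j == consecutive_meet m (row_join m P i) j)%MS.
Proof.
move=> /(_ m (leqnn m) i j) [rankLA _ rank_meet].
rewrite -(eq_leqif (mxrank_leqif_eq (LAn_sub_consecutive_meet _ _ _ _))).
by rewrite rankLA [X in _ == X]rank_meet subnn.
Qed.

End RowJoins.

Theorem proposition2p3 (R : realType) (n m : nat) (P : net R n) :
  is_qnet P -> (0 < m)%N -> (m < n)%N -> generic_LA m P ->
  (LA_degenerate m P <->
   forall i : int, meet_is_point (fun j : int => row_join m P i j)).
Proof.
(* The Q-net property and the bounds on m only serve to make [generic_LA m P]
   attainable; the argument itself uses genericity alone. *)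
move=> _ _ _ genP.
have rank_meet i j : \rank (consecutive_meet m (row_join m P i) j) = 1%N.
  by have [_ _] := genP m (leqnn m) i j; rewrite subnn.
have LAn_eq_iff i j j' : (LAn m P i j == LAn m P i j')%MS =
    (consecutive_meet m (row_join m P i) j ==
     consecutive_meet m (row_join m P i) j')%MS.
  have LAn_eq j'' := eqmxP (LAn_eq_consecutive_meet i j'' genP).
  apply/eqmxP/eqmxP => [eq_LAn | eq_meet].
    exact: eqmx_trans (eqmx_sym (LAn_eq j)) (eqmx_trans eq_LAn (LAn_eq j')).
  exact: eqmx_trans (LAn_eq j) (eqmx_trans eq_meet (eqmx_sym (LAn_eq j'))).
split=> [degP i | pointP i j j'].
  apply/(meet_is_point_iff_consecutive_meet_const (rank_meet i)) => j j'.
  by rewrite -LAn_eq_iff.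
have := (meet_is_point_iff_consecutive_meet_const (rank_meet i)).1 (pointP i).
by rewrite LAn_eq_iff; apply.
Qed.
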